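(* Let $\mathsf{P}>0$, $A_{\mathsf{u},k}>0$, $\sigma_k^2>0$, $\mathsf{g}_k>0$ for $k\in\{1,2\}$, $k_0,\eta>0$, $\rho\in\mathbb{C}$ with $|\rho|<1$, $\overline{\rho}=1-|\rho|^2$. Let $\widetilde{\gamma}_{\mathsf{dl},k}(x)=\frac{A_{\mathsf{u},k}k_0^2\eta^2}{4\pi\sigma_k^2}x$ and $$\mathsf{C}_{\mathsf{dl}}=\max_{\mathsf{P}_1,\mathsf{P}_2\ge0,\ \mathsf{P}_1+\mathsf{P}_2\le\mathsf{P}}\log_2\big(1+\widetilde{\gamma}_{\mathsf{dl},1}(\mathsf{P}_1)\mathsf{g}_1+\widetilde{\gamma}_{\mathsf{dl},2}(\mathsf{P}_2)\mathsf{g}_2+\widetilde{\gamma}_{\mathsf{dl},1}(\mathsf{P}_1)\widetilde{\gamma}_{\mathsf{dl},2}(\mathsf{P}_2)\mathsf{g}_1\mathsf{g}_2\overline{\rho}\big).$$ Let $\xi=\dfrac{A_{\mathsf{u},1}\mathsf{g}_1/\sigma_1^2-A_{\mathsf{u},2}\mathsf{g}_2/\sigma_2^2}{A_{\mathsf{u},1}A_{\mathsf{u},2}k_0^2\eta^2\mathsf{g}_1\mathsf{g}_2\overline{\rho}/(4\pi\sigma_1^2\sigma_2^2)}$, $\varepsilon_1=\widetilde{\gamma}_{\mathsf{dl},1}\big(\tfrac{\mathsf{P}+\xi}{2}\big)\mathsf{g}_1$ and $\varepsilon_2=\widetilde{\gamma}_{\mathsf{dl},2}\big(\tfrac{\mathsf{P}-\xi}{2}\big)\mathsf{g}_2$.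 Then $$\mathsf{C}_{\mathsf{dl}}=\begin{cases}\log_2(1+\widetilde{\gamma}_{\mathsf{dl},1}(\mathsf{P})\mathsf{g}_1)&\xi\ge\mathsf{P},\\\log_2(1+\widetilde{\gamma}_{\mathsf{dl},2}(\mathsf{P})\mathsf{g}_2)&\xi\le-\mathsf{P},\\\log_2(1+\varepsilon_1+\varepsilon_2+\varepsilon_1\varepsilon_2\overline{\rho})&\text{otherwise}.\end{cases}$$
   Context: In the paper, the maximum defining $\mathsf{C}_{\mathsf{dl}}$ is the sum-rate capacity of the dual uplink channel, which by uplink–downlink duality equals the sum-rate capacity of the two-user downlink channel from a continuous-aperture array $\mathcal{A}$; here $\mathsf{g}_k=\int_{\mathcal{A}}|\mathsf{G}_k|^2$ are the users' channel gains and $\rho=\int_{\mathcal{A}}\mathsf{G}_1^*\mathsf{G}_2/\sqrt{\mathsf{g}_1\mathsf{g}_2}$ their channel correlation factor. *)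

From Stdlib Require Import Reals.
From Coquelicot Require Import Coquelicot.
Open Scope R_scope.

Definition log2 (x : R) : R := ln x / ln 2.

(* gamma~_{dl,k}(x) = A_{u,k} k0^2 eta^2 / (4 pi sigma_k^2) * x ; s2 stands for sigma_k^2 *)
Definition gamma_dl (Au k0 eta s2 x : R) : R :=
  Au * k0 ^ 2 * eta ^ 2 / (4 * PI * s2) * x.

Definition is_max_value {T : Type} (S : T -> Prop) (f : T -> R) (v : R) : Prop :=
  (exists p, S p /\ f p = v) /\ (forall p, S p -> f p <= v).

(** With [a = gt1(1) g1], [b = gt2(1) g2] and [r = rhob], the argument of the
    logarithm is [f t u = 1 + a t + b u + a b r t u].  It is increasing in [u],
    so the maximum lies on the budget line [u = P - t], where [f] is a concave
    quadratic in [t] with vertex [t = (P + xi)/2], since [xi = (a - b)/(a b r)].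
    If the vertex lies in [[0, P]] it is the maximiser; otherwise the quadratic
    is monotone on [[0, P]] and the maximum is at the endpoint [t = P]
    (when [xi >= P]) or [t = 0] (when [xi <= -P]). *)

From Stdlib Require Import Reals Lra Psatz.
From Coquelicot Require Import Coquelicot.
Open Scope R_scope.

Lemma log2_le (x y : R) : 0 < x -> x <= y -> log2 x <= log2 y.
Proof.
intros Hx Hxy; unfold log2, Rdiv.
apply Rmult_le_compat_r; [|exact (ln_le x y Hx Hxy)].
left; apply Rinv_0_lt_compat; rewrite <- ln_1; apply ln_increasing; lra.
Qed.

Lemma is_max_value_log2 {T : Type} (S : T -> Prop) (f : T -> R) (v : R) :
  (forall p, S p -> 0 < f p) ->
  is_max_value S f v -> is_max_value S (fun p => log2 (f p)) (log2 v).
Proof.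
intros Hpos [[p [Sp <-]] Hle]; split.
- exists p; split; trivial.
- intros q Sq; apply log2_le; auto.
Qed.

Lemma is_max_value_ext {T : Type} (S : T -> Prop) (f g : T -> R) (v w : R) :
  is_max_value S f v ->
  (forall p, S p -> f p = g p) -> v = w -> is_max_value S g w.
Proof.
intros [[p [Sp <-]] Hle] Hfg <-; split.
- exists p; split; [exact Sp | symmetry; exact (Hfg p Sp)].
- intros q Sq; rewrite <- (Hfg q Sq); exact (Hle q Sq).
Qed.

Definition power_budget (P : R) (p : R * R) : Prop :=
  0 <= fst p /\ 0 <= snd p /\ fst p + snd p <= P.

Definition sum_rate_arg (a b r t u : R) : R := 1 + a * t + b * u + a * t * (b * u) * r.

Section SumRateArg.

Variables a b r : R.
Hypotheses (Ha : 0 < a) (Hb : 0 < b) (Hr : 0 < r).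

Let Habr : 0 < a * b * r.
Proof. apply Rmult_lt_0_compat; [apply Rmult_lt_0_compat|]; assumption. Qed.

Lemma sum_rate_arg_pos (t u : R) : 0 <= t -> 0 <= u -> 0 < sum_rate_arg a b r t u.
Proof.
intros Ht Hu; unfold sum_rate_arg.
assert (0 <= a * t) by nra.
assert (0 <= b * u) by nra.
assert (0 <= a * t * (b * u) * r) by (apply Rmult_le_pos; [apply Rmult_le_pos|]; lra).
lra.
Qed.

Lemma sum_rate_arg_le_budget_line (P t u : R) :
  0 <= t -> t + u <= P -> sum_rate_arg a b r t u <= sum_rate_arg a b r t (P - t).
Proof.
intros Ht Htu; unfold sum_rate_arg.
assert (0 <= (P - t - u) * (b + a * t * b * r)).
{ apply Rmult_le_pos; [lra|]. assert (0 <= a * t * b * r) by nra. lra. }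
nra.
Qed.

Variables P xi : R.
Hypothesis HP : 0 <= P.
Hypothesis Hxi : xi * (a * b * r) = a - b.

Lemma sum_rate_arg_budget_line_le_left (t : R) :
  0 <= t <= P -> P <= xi -> sum_rate_arg a b r t (P - t) <= sum_rate_arg a b r P 0.
Proof.
intros Ht HPxi.
assert (0 <= (P - t) * (a * b * r * (xi - t))) by (apply Rmult_le_pos; nra).
unfold sum_rate_arg; nra.
Qed.

Lemma sum_rate_arg_budget_line_le_right (t : R) :
  0 <= t <= P -> xi <= - P -> sum_rate_arg a b r t (P - t) <= sum_rate_arg a b r 0 P.
Proof.
intros Ht HPxi.
assert (0 <= t * (a * b * r * (t - xi - P))) by (apply Rmult_le_pos; nra).
unfold sum_rate_arg; nra.
Qed.

Lemma sum_rate_arg_budget_line_vertex (t : R) :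
  sum_rate_arg a b r t (P - t) + a * b * r * (t - (P + xi) / 2) ^ 2
  = sum_rate_arg a b r ((P + xi) / 2) ((P - xi) / 2).
Proof.
unfold sum_rate_arg; apply Rminus_diag_uniq.
transitivity ((a - b - xi * (a * b * r)) * (t - (P + xi) / 2)); [field | rewrite Hxi; ring].
Qed.

Lemma sum_rate_arg_budget_line_le_vertex (t : R) :
  sum_rate_arg a b r t (P - t) <= sum_rate_arg a b r ((P + xi) / 2) ((P - xi) / 2).
Proof.
rewrite <- (sum_rate_arg_budget_line_vertex t).
assert (0 <= a * b * r * (t - (P + xi) / 2) ^ 2)
  by (apply Rmult_le_pos; [exact (Rlt_le _ _ Habr) | apply pow2_ge_0]).
lra.
Qed.

Lemma sum_rate_arg_max :
  is_max_value (power_budget P) (fun p => sum_rate_arg a b r (fst p) (snd p))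
    (if Rle_dec P xi then sum_rate_arg a b r P 0
     else if Rle_dec xi (- P) then sum_rate_arg a b r 0 P
     else sum_rate_arg a b r ((P + xi) / 2) ((P - xi) / 2)).
Proof.
assert (Hline : forall t u, power_budget P (t, u) ->
          0 <= t <= P /\ sum_rate_arg a b r t u <= sum_rate_arg a b r t (P - t)).
{ intros t u [Ht [Hu Htu]]; simpl in Ht, Hu, Htu.
  split; [lra | exact (sum_rate_arg_le_budget_line P t u Ht Htu)]. }
destruct (Rle_dec P xi) as [H1|H1]; [|destruct (Rle_dec xi (- P)) as [H2|H2]]; split.
- exists (P, 0); split; [red; simpl; lra | reflexivity].
- intros [t u] [Ht Hle]%Hline; simpl.
  apply (Rle_trans _ _ _ Hle), sum_rate_arg_budget_line_le_left; assumption.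
- exists (0, P); split; [red; simpl; lra | reflexivity].
- intros [t u] [Ht Hle]%Hline; simpl.
  apply (Rle_trans _ _ _ Hle), sum_rate_arg_budget_line_le_right; assumption.
- exists ((P + xi) / 2, (P - xi) / 2); split; [red; simpl; lra | reflexivity].
- intros [t u] [Ht Hle]%Hline; simpl.
  apply (Rle_trans _ _ _ Hle), sum_rate_arg_budget_line_le_vertex.
Qed.

End SumRateArg.

Lemma gamma_dl_pos_slope (Au k0 eta s2 : R) :
  0 < Au -> 0 < s2 -> 0 < k0 -> 0 < eta -> 0 < gamma_dl Au k0 eta s2 1.
Proof.
intros HA Hs Hk He; unfold gamma_dl.
assert (Hpi := PI_RGT_0).
assert (0 < 4 * PI * s2) by nra.
assert (0 < Au * k0 ^ 2 * eta ^ 2) by (repeat apply Rmult_lt_0_compat; try apply pow_lt; lra).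
rewrite Rmult_1_r; apply Rdiv_lt_0_compat; assumption.
Qed.

Theorem theorem5 (P Au1 Au2 s1 s2 g1 g2 k0 eta : R) (rho : C) :
  0 < P -> 0 < Au1 -> 0 < Au2 -> 0 < s1 -> 0 < s2 -> 0 < g1 -> 0 < g2 ->
  0 < k0 -> 0 < eta -> Cmod rho < 1 ->
  let rhob := 1 - Cmod rho ^ 2 in
  let gt1 := gamma_dl Au1 k0 eta s1 in
  let gt2 := gamma_dl Au2 k0 eta s2 in
  let feasible := fun p : R * R => 0 <= fst p /\ 0 <= snd p /\ fst p + snd p <= P in
  let obj := fun p : R * R =>
    log2 (1 + gt1 (fst p) * g1 + gt2 (snd p) * g2
            + gt1 (fst p) * gt2 (snd p) * g1 * g2 * rhob) in
  let xi := (Au1 * g1 / s1 - Au2 * g2 / s2)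
            / (Au1 * Au2 * k0 ^ 2 * eta ^ 2 * g1 * g2 * rhob / (4 * PI * s1 * s2)) in
  let eps1 := gt1 ((P + xi) / 2) * g1 in
  let eps2 := gt2 ((P - xi) / 2) * g2 in
  is_max_value feasible obj
    (if Rle_dec P xi then log2 (1 + gt1 P * g1)
     else if Rle_dec xi (- P) then log2 (1 + gt2 P * g2)
     else log2 (1 + eps1 + eps2 + eps1 * eps2 * rhob)).
Proof.
intros HP HA1 HA2 Hs1 Hs2 Hg1 Hg2 Hk He Hrho rhob gt1 gt2 feasible obj xi eps1 eps2.
set (a := gt1 1 * g1); set (b := gt2 1 * g2).
assert (Ha : 0 < a) by (apply Rmult_lt_0_compat; [apply gamma_dl_pos_slope|]; assumption).
assert (Hb : 0 < b) by (apply Rmult_lt_0_compat; [apply gamma_dl_pos_slope|]; assumption).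
assert (Hr : 0 < rhob) by (pose proof (Cmod_ge_0 rho); unfold rhob; nra).
assert (Hxi : xi * (a * b * rhob) = a - b).
{ assert (Hpi := PI_RGT_0).
  assert (0 < Au1 * Au2 * k0 ^ 2 * eta ^ 2 * g1 * g2 * rhob)
    by (repeat apply Rmult_lt_0_compat; try apply pow_lt; lra).
  unfold xi, a, b, gt1, gt2, gamma_dl; field; repeat split; lra. }
assert (Hmax := sum_rate_arg_max a b rhob Ha Hb Hr P xi (Rlt_le _ _ HP) Hxi).
apply is_max_value_log2 in Hmax;
  [|intros [t u] [Ht [Hu _]]; apply sum_rate_arg_pos; assumption].
apply (is_max_value_ext _ _ _ _ _ Hmax).
- intros p _; unfold obj, sum_rate_arg, a, b, gt1, gt2, gamma_dl.
  f_equal; ring.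
- unfold eps1, eps2, sum_rate_arg, a, b, gt1, gt2, gamma_dl.
  destruct (Rle_dec P xi); [|destruct (Rle_dec xi (- P))]; f_equal; ring.
Qed.
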